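(* Fix $n\ge1$. For $\theta>0$ let $X_{1,n}$ be a random variable on $\{1,\dots,n\}$ with $$P\{X_{1,n}=k\}=\frac\theta n\,\frac{n!}{(n-k)!}\,\frac{\Gamma(\theta+n-k)}{\Gamma(\theta+n)},\quad k=1,\dots,n.$$ Then, as $\theta\to\infty$, the family of laws of $X_{1,n}$ satisfies an LDP on $\{1,\dots,n\}$ with speed $\log\theta$ and rate function $I(k)=k-1$.
   Context: $X_{1,n}$ is the size of the first (oldest) age class in a random sample of size $n$ from a $PD(\theta)$ population; the displayed formula is its law. An LDP with speed $\log\theta$ uses normalization $(\log\theta)^{-1}\log$ as $\theta\to\infty$. *)

From Stdlib Require Import Reals Lra Lia Arith Factorial.
From Coquelicot Require Import Coquelicot.
Open Scope R_scope.

Definition Gamma (x : R) : R :=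
  RInt_gen (fun t => Rpower t (x - 1) * exp (- t)) (at_right 0) (Rbar_locally p_infty).

Definition law_X1n (n : nat) (theta : R) (k : nat) : R :=
  theta / INR n * (INR (Factorial.fact n) / INR (Factorial.fact (n - k)))
  * (Gamma (theta + INR n - INR k) / Gamma (theta + INR n)).

Definition in_range (n k : nat) : bool := andb (Nat.leb 1 k) (Nat.leb k n).

Definition mass (n : nat) (mu : nat -> R) (A : nat -> bool) : R :=
  sum_f_R0 (fun k => if andb (in_range n k) (A k) then mu k else 0) n.

(* infimum of I over A ∩ {1..n} (an extended real, +oo if empty) *)
Definition inf_over (n : nat) (I : nat -> R) (A : nat -> bool) : Rbar :=
  Glb_Rbar (fun x => exists k, in_range n k = true /\ A k = true /\ x = I k).

Definition eventually_large (P : R -> Prop) : Prop :=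
  exists T : R, forall theta, T < theta -> P theta.

(* Large deviation principle, as theta -> +oo, for the family of laws
   (mu theta) on the finite set {1..n} with the discrete topology (every subset
   is open and closed, every function is lower semicontinuous and every level
   set is compact), with speed s(theta) and rate function I:
     limsup  s(theta)^-1 log mu_theta(A) <= - inf_A I   (A closed)
     liminf  s(theta)^-1 log mu_theta(A) >= - inf_A I   (A open).
   For A ∩ {1..n} empty both bounds are trivial (log 0 = -oo, inf = +oo),
   so they are required for nonempty A only; the limsup/liminf bounds are
   written in their epsilon form (the bound -inf_A I is then finite). *)
Definition LDP_finite (n : nat) (mu : R -> nat -> R) (speed : R -> R)
    (I : nat -> R) : Prop :=
  (forall k, in_range n k = true -> 0 <= I k) /\
  forall A : nat -> bool,
    (exists k, in_range n k = true /\ A k = true) ->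
    forall eps, 0 < eps ->
      eventually_large (fun theta =>
        Rbar_le (ln (mass n (mu theta) A) / speed theta)
                (Rbar_plus (Rbar_opp (inf_over n I A)) eps))
   /\ eventually_large (fun theta =>
        Rbar_le (Rbar_minus (Rbar_opp (inf_over n I A)) eps)
                (ln (mass n (mu theta) A) / speed theta)).

From Stdlib Require Import Reals Lra Lia Factorial Classical.
From Coquelicot Require Import Coquelicot.
Open Scope R_scope.

(* For [x >= 1], [Gamma (x + k) = x (x+1) ... (x+k-1) Gamma x]; with [x = theta + n - k]
   this gives [P{X_{1,n} = k} = (theta / n) (n! / (n-k)!) / ((theta+n-k) ... (theta+n-1))],
   which for [theta >= n] lies between two positive constants times [theta ^ (1 - k)].
   On the finite set [{1..n}] such two-sided power bounds give the LDP with speed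
   [ln theta] and rate [k - 1]: the mass of a set is comparable to its term of least
   exponent, and the constants vanish after division by [ln theta]. *)

Lemma exp_le_compat x y : x <= y -> exp x <= exp y.
Proof. intros [H | ->]; [left; apply exp_increasing; exact H | lra]. Qed.

Lemma exp_le_1 x : x <= 0 -> exp x <= 1.
Proof. intros H; rewrite <- exp_0; apply exp_le_compat, H. Qed.

(* The bound comes from [ln u <= u - 1] at [u = t / (2 p)]. *)
Lemma Rpower_mul_exp_le p : 0 <= p ->
  exists K, 0 < K /\ forall t, 0 < t -> Rpower t p * exp (- t) <= K * exp (- t / 2).
Proof.
  intros Hp. exists (exp (p * (ln (2 * p) - 1))). split; [apply exp_pos|].
  intros t Ht. unfold Rpower. rewrite <- !exp_plus. apply exp_le_compat.
  destruct Hp as [Hp | <-]; [|lra].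
  assert (Hln := exp_ineq1_le (ln (t / (2 * p)))).
  rewrite exp_ln, ln_div in Hln by (try apply Rdiv_lt_0_compat; lra).
  apply (Rmult_le_compat_l p) in Hln; [|lra].
  replace (p * (t / (2 * p))) with (t / 2) in Hln by (field; lra). lra.
Qed.

Lemma RInt_exp_half K a b :
  RInt (fun t => K * exp (- t / 2)) a b = 2 * K * (exp (- a / 2) - exp (- b / 2)).
Proof.
  apply is_RInt_unique.
  replace (2 * K * (exp (- a / 2) - exp (- b / 2)))
    with ((-2 * K * exp (- b / 2)) - (-2 * K * exp (- a / 2))) by ring.
  apply (is_RInt_derive (fun t => -2 * K * exp (- t / 2))).
  - intros t _. auto_derive; auto. unfold Rdiv; field.
  - intros t _. apply (ex_derive_continuous (fun t => K * exp (- t / 2))). auto_derive; auto.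
Qed.

Section ImproperIntegral.

Variable f : R -> R.
Hypothesis f_cont : forall t, 0 < t -> continuous f t.
Hypothesis f_ge0 : forall t, 0 < t -> 0 <= f t.

Lemma ex_RInt_pos a b : 0 < a -> 0 < b -> ex_RInt f a b.
Proof.
  intros Ha Hb. apply (@ex_RInt_continuous R_CompleteNormedModule). intros z Hz. apply f_cont.
  assert (0 < Rmin a b) by (apply Rmin_glb_lt; assumption). lra.
Qed.

Lemma RInt_le_RInt_wider a b a' b' : 0 < a' <= a -> a <= b -> b <= b' ->
  RInt f a b <= RInt f a' b'.
Proof.
  intros Ha Hab Hb.
  rewrite <- (RInt_Chasles f a' a b'), <- (RInt_Chasles f a b b')
    by (apply ex_RInt_pos; lra).
  assert (0 <= RInt f a' a)
    by (apply RInt_ge_0; [lra | apply ex_RInt_pos; lra | intros; apply f_ge0; lra]).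
  assert (0 <= RInt f b b')
    by (apply RInt_ge_0; [lra | apply ex_RInt_pos; lra | intros; apply f_ge0; lra]).
  unfold plus; simpl; lra.
Qed.

(* The improper integral is the supremum of the integrals over compact subintervals. *)
Lemma is_RInt_gen_of_bounded M : (forall a b, 0 < a <= b -> RInt f a b <= M) ->
  exists L, is_RInt_gen f (at_right 0) (Rbar_locally p_infty) L /\
            forall a b, 0 < a <= b -> RInt f a b <= L.
Proof.
  intros HM.
  set (S := fun v => exists a b, 0 < a <= b /\ v = RInt f a b).
  destruct (completeness S) as [L [HLub HLleast]].
  - exists M. intros v [a [b [Hab ->]]]. apply HM, Hab.
  - exists (RInt f 1 1), 1, 1. split; [lra | reflexivity].
  exists L. split; [| intros a b Hab; apply HLub; exists a, b; auto].
  intros P [eps Heps].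
  assert (Hclose : exists a0 b0, 0 < a0 <= b0 /\ L - eps < RInt f a0 b0).
  { apply NNPP. intros Hno. assert (L <= L - eps); [|destruct eps; simpl in *; lra].
    apply HLleast. intros v [a [b [Hab ->]]].
    apply Rnot_lt_le. intros Hlt. apply Hno. exists a, b. auto. }
  destruct Hclose as [a0 [b0 [Hab0 Hlt]]].
  apply Filter_prod with (fun a => 0 < a < a0) (fun b => b0 < b).
  - exists (mkposreal a0 (proj1 Hab0)). intros y Hy Hy0. split; [exact Hy0|].
    apply Rabs_lt_between' in Hy. simpl in Hy. lra.
  - exists b0. auto.
  - intros a b Ha Hb. exists (RInt f a b). split.
    + apply (@RInt_correct R_CompleteNormedModule), ex_RInt_pos; lra.
    + apply Heps.
      assert (RInt f a b <= L) by (apply HLub; exists a, b; split; [lra | reflexivity]).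
      assert (RInt f a0 b0 <= RInt f a b) by (apply RInt_le_RInt_wider; lra).
      change (Rabs (RInt f a b - L) < eps). rewrite Rabs_left1 by lra. lra.
Qed.

End ImproperIntegral.

Definition gamma_kernel (x t : R) : R := Rpower t (x - 1) * exp (- t).

Lemma gamma_kernel_pos x t : 0 < gamma_kernel x t.
Proof. apply Rmult_lt_0_compat; apply exp_pos. Qed.

Lemma is_derive_Rpower p t : 0 < t -> is_derive (fun t => Rpower t p) t (p * Rpower t (p - 1)).
Proof. intros Ht; apply is_derive_Reals, derivable_pt_lim_power, Ht. Qed.

Lemma continuous_gamma_kernel x t : 0 < t -> continuous (gamma_kernel x) t.
Proof.
  intros Ht. apply (@ex_derive_continuous R_AbsRing R_NormedModule).
  apply ex_derive_mult; [eexists; apply is_derive_Rpower, Ht | auto_derive; auto].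
Qed.

Lemma is_RInt_gen_Gamma x : 1 <= x ->
  is_RInt_gen (gamma_kernel x) (at_right 0) (Rbar_locally p_infty) (Gamma x) /\ 0 < Gamma x.
Proof.
  intros Hx. destruct (Rpower_mul_exp_le (x - 1) ltac:(lra)) as [K [HK Hbound]].
  destruct (is_RInt_gen_of_bounded (gamma_kernel x) (continuous_gamma_kernel x)
              (fun t _ => Rlt_le _ _ (gamma_kernel_pos x t)) (2 * K)) as [L [HL Hsup]].
  { intros a b Hab.
    apply Rle_trans with (RInt (fun t => K * exp (- t / 2)) a b).
    - apply RInt_le; [lra | apply ex_RInt_pos; [apply continuous_gamma_kernel|lra|lra] | |].
      + apply (@ex_RInt_continuous R_CompleteNormedModule). intros z _.
        apply (@ex_derive_continuous R_AbsRing R_NormedModule). auto_derive; auto.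
      + intros t Ht; apply Hbound; lra.
    - rewrite RInt_exp_half.
      assert (0 < exp (- b / 2)) by apply exp_pos.
      assert (exp (- a / 2) <= 1) by (apply exp_le_1; lra). nra. }
  replace (Gamma x) with L by (symmetry; apply is_RInt_gen_unique, HL).
  split; [exact HL|].
  apply Rlt_le_trans with (RInt (gamma_kernel x) 1 2); [|apply Hsup; lra].
  apply RInt_gt_0; [lra | intros; apply gamma_kernel_pos | intros; apply continuous_gamma_kernel; lra].
Qed.

Lemma is_lim_exp_half K : is_lim (fun t => K * exp (- t / 2)) p_infty 0.
Proof.
  replace (Finite 0) with (Rbar_mult K 0) by (simpl; rewrite Rmult_0_r; reflexivity).
  apply is_lim_scal_l, (is_lim_comp exp (fun t => - t / 2) p_infty 0 m_infty).
  - apply is_lim_exp_m.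
  - intros P [M HM]. exists (- 2 * M). intros t Ht. apply HM. lra.
  - exists 0. intros t _. discriminate.
Qed.

Lemma is_derive_Rpower_mul_exp x t : 0 < t ->
  is_derive (fun t => Rpower t x * exp (- t)) t (x * gamma_kernel x t - gamma_kernel (x + 1) t).
Proof.
  intros Ht. unfold gamma_kernel. replace (x + 1 - 1) with x by ring.
  replace (x * (Rpower t (x - 1) * exp (- t)) - Rpower t x * exp (- t))
    with (x * Rpower t (x - 1) * exp (- t) + Rpower t x * (-1 * exp (- t))) by ring.
  apply (is_derive_mult (fun t => Rpower t x) (fun t => exp (- t))); [apply is_derive_Rpower, Ht | |].
  - auto_derive; [exact I | ring].
  - intros; apply Rmult_comm.
Qed.

Lemma filterlim_Rpower_mul_exp_0 x : 1 <= x ->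
  filterlim (fun t => Rpower t x * exp (- t)) (at_right 0) (locally 0).
Proof.
  intros Hx. change (filterlim (fun t => Rpower t x * exp (- t)) (at_right 0) (Rbar_locally 0)).
  apply (filterlim_le_le (fun _ => 0) _ (fun t => t)); [| apply filterlim_const |].
  - exists (mkposreal 1 Rlt_0_1). intros t Ht Ht0.
    apply Rabs_lt_between' in Ht; simpl in Ht.
    unfold Rpower. split; [left; apply Rmult_lt_0_compat; apply exp_pos|].
    assert (Hln : ln t <= 0) by (rewrite <- ln_1; apply ln_le; lra).
    assert (Hpow : exp (x * ln t) <= exp (ln t)) by (apply exp_le_compat; nra).
    rewrite exp_ln in Hpow by exact Ht0.
    assert (exp (- t) <= 1) by (apply exp_le_1; lra).
    assert (0 < exp (x * ln t)) by apply exp_pos. nra.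
  - intros P [d Hd]. exists d. intros y Hy _. apply Hd, Hy.
Qed.

Lemma filterlim_Rpower_mul_exp_infty x : 0 <= x ->
  filterlim (fun t => Rpower t x * exp (- t)) (Rbar_locally p_infty) (locally 0).
Proof.
  intros Hx. destruct (Rpower_mul_exp_le x Hx) as [K [_ HK]].
  change (filterlim (fun t => Rpower t x * exp (- t)) (Rbar_locally p_infty) (Rbar_locally 0)).
  apply (filterlim_le_le (fun _ => 0) _ (fun t => K * exp (- t / 2)));
    [| apply filterlim_const | apply is_lim_exp_half].
  exists 0. intros t Ht. split; [left; apply Rmult_lt_0_compat; apply exp_pos | apply HK, Ht].
Qed.

(* Integration by parts against [t ^ x e^(-t)], which vanishes at both ends. *)
Lemma Gamma_succ x : 1 <= x -> Gamma (x + 1) = x * Gamma x.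
Proof.
  intros Hx. destruct (is_RInt_gen_Gamma x Hx) as [HG _].
  (* Opaque, so that [simpl] below does not unfold the improper integral. *)
  set (G := Gamma x) in *; clearbody G.
  set (g := fun t => Rpower t x * exp (- t)).
  assert (Dg := is_derive_Rpower_mul_exp x).
  assert (Hpos : filter_prod (at_right 0) (Rbar_locally p_infty)
                  (fun ab => 0 < Rmin (fst ab) (snd ab))).
  { apply Filter_prod with (fun a => 0 < a) (fun b => 0 < b).
    - exists (mkposreal 1 Rlt_0_1). auto.
    - exists 0. auto.
    - intros a b Ha Hb. apply Rmin_glb_lt; assumption. }
  assert (HDg : is_RInt_gen (Derive g) (at_right 0) (Rbar_locally p_infty) (0 - 0)).
  { apply is_RInt_gen_Derive; [| | apply filterlim_Rpower_mul_exp_0, Hx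
                                 | apply filterlim_Rpower_mul_exp_infty; lra];
      refine (filter_imp _ _ _ Hpos); intros [a b] Hab t Ht; simpl in Hab, Ht.
    - eexists; apply Dg; lra.
    - apply continuous_ext_loc with (fun y => x * gamma_kernel x y - gamma_kernel (x + 1) y).
      + exists (mkposreal t ltac:(lra)). intros y Hy. apply Rabs_lt_between' in Hy; simpl in Hy.
        symmetry; apply is_derive_unique, Dg; lra.
      + apply (@continuous_minus R_UniformSpace R_AbsRing R_NormedModule);
          [apply (@continuous_scal_r R_UniformSpace R_AbsRing R_NormedModule) |];
          apply continuous_gamma_kernel; lra. }
  unfold Gamma; apply (is_RInt_gen_unique (gamma_kernel (x + 1))).
  replace (x * G) with (minus (scal x G) (0 - 0))
    by (unfold minus, plus, opp, scal; simpl; unfold mult; simpl; ring).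
  eapply is_RInt_gen_ext;
    [| exact (is_RInt_gen_minus _ _ _ _ (is_RInt_gen_scal _ x _ HG) HDg)].
  refine (filter_imp _ _ _ Hpos); intros [a b] Hab t Ht; simpl in Hab, Ht.
  rewrite (is_derive_unique g t _ (Dg t ltac:(lra))).
  unfold minus, plus, opp, scal; simpl; unfold mult; simpl. ring.
Qed.

Fixpoint rising (x : R) (k : nat) : R :=
  match k with O => 1 | S k => rising x k * (x + INR k) end.

Lemma Gamma_add_nat x k : 1 <= x -> Gamma (x + INR k) = rising x k * Gamma x.
Proof.
  intros Hx. induction k as [|k IHk]; simpl rising.
  - rewrite Rplus_0_r; ring.
  - rewrite S_INR, <- Rplus_assoc, Gamma_succ, IHk by (pose proof (pos_INR k); lra). ring.
Qed.

Lemma rising_bounds a b x k : 0 < a <= x -> x + INR k <= b -> a ^ k <= rising x k <= b ^ k.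
Proof.
  intros Hax. induction k as [|k IHk]; intros Hb; simpl; [lra|].
  rewrite S_INR in Hb. pose proof (pos_INR k).
  assert (0 <= a ^ k) by (apply pow_le; lra).
  destruct IHk as [IHa IHb]; [lra|].
  split; rewrite Rmult_comm; apply Rmult_le_compat; lra.
Qed.

Lemma fact_div_fact_bounds n k : (k <= n)%nat ->
  1 <= INR (fact n) / INR (fact (n - k)) <= INR (fact n).
Proof.
  intros Hk.
  assert (H1 : 1 <= INR (fact (n - k))) by (apply (le_INR 1), lt_O_fact).
  assert (H2 : INR (fact (n - k)) <= INR (fact n)) by (apply le_INR, fact_le; lia).
  split.
  - apply Rmult_le_reg_r with (INR (fact (n - k))); [lra|].
    unfold Rdiv; rewrite Rmult_assoc, Rinv_l; lra.
  - apply Rmult_le_reg_r with (INR (fact (n - k))); [lra|].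
    unfold Rdiv; rewrite Rmult_assoc, Rinv_l by lra. nra.
Qed.

Lemma law_X1n_Rpower_bounds n theta k : (1 <= k <= n)%nat -> INR n <= theta ->
  / (INR n * 2 ^ n) <= law_X1n n theta k * Rpower theta (INR k - 1) <= INR (fact n).
Proof.
  intros Hk Hth.
  assert (Hn : 1 <= INR n) by (apply (le_INR 1); lia).
  assert (Hkn : INR k <= INR n) by (apply le_INR; lia).
  assert (Hk1 : 1 <= INR k) by (apply (le_INR 1); lia).
  set (x := theta + INR n - INR k).
  assert (Ex : theta + INR n = x + INR k) by (unfold x; ring).
  destruct (is_RInt_gen_Gamma x ltac:(unfold x; lra)) as [_ HGpos].
  destruct (rising_bounds theta (2 * theta) x k ltac:(unfold x; lra) ltac:(lra)) as [Hr1 Hr2].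
  destruct (fact_div_fact_bounds n k ltac:(lia)) as [HF1 HF2].
  assert (Hth_k : 0 < theta ^ k) by (apply pow_lt; lra).
  assert (Hpow : Rpower theta (INR k - 1) * theta = theta ^ k).
  { replace (INR k - 1) with (INR (k - 1)) by (rewrite minus_INR by lia; reflexivity).
    rewrite Rpower_pow, Rmult_comm by lra. replace k with (S (k - 1)) at 2 by lia. reflexivity. }
  set (F := INR (fact n) / INR (fact (n - k))) in *.
  set (r := rising x k) in *.
  assert (Elaw : law_X1n n theta k * Rpower theta (INR k - 1) = F / INR n * (theta ^ k / r)).
  { unfold law_X1n. fold x F. rewrite Ex, Gamma_add_nat by (unfold x; lra). fold r.
    rewrite <- Hpow. field. repeat split; lra. }
  rewrite Elaw.
  assert (Hr_up : theta ^ k / r <= 1).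
  { apply Rmult_le_reg_r with r; [lra|]. unfold Rdiv; rewrite Rmult_assoc, Rinv_l; lra. }
  assert (Hr_lo : / 2 ^ n <= theta ^ k / r).
  { rewrite Rpow_mult_distr in Hr2.
    assert (2 ^ k <= 2 ^ n) by (apply Rle_pow; [lra | lia]).
    assert (0 < 2 ^ k) by (apply pow_lt; lra).
    apply Rmult_le_reg_r with (2 ^ n * r); [nra|].
    replace (/ 2 ^ n * (2 ^ n * r)) with r by (field; apply pow_nonzero; lra).
    replace (theta ^ k / r * (2 ^ n * r)) with (theta ^ k * 2 ^ n) by (field; lra). nra. }
  assert (0 < / 2 ^ n) by (apply Rinv_0_lt_compat, pow_lt; lra).
  split.
  - replace (/ (INR n * 2 ^ n)) with (1 / INR n * / 2 ^ n)
      by (field; split; [apply pow_nonzero |]; lra).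
    apply Rmult_le_compat; try lra.
    + apply Rdiv_le_0_compat; lra.
    + apply Rmult_le_compat_r; [left; apply Rinv_0_lt_compat |]; lra.
  - assert (F / INR n <= F) by (apply Rmult_le_reg_r with (INR n); [lra|];
                               unfold Rdiv; rewrite Rmult_assoc, Rinv_l; nra).
    assert (0 <= F / INR n) by (apply Rdiv_le_0_compat; lra). nra.
Qed.

Lemma finite_argmin (P : nat -> bool) (f : nat -> R) N :
  (exists k, (k <= N)%nat /\ P k = true) ->
  exists m, (m <= N)%nat /\ P m = true /\
            forall k, (k <= N)%nat -> P k = true -> f m <= f k.
Proof.
  induction N as [|N IHN]; intros [k0 [Hk0 Pk0]].
  - exists 0%nat. replace k0 with 0%nat in Pk0 by lia.
    repeat split; [lia | exact Pk0 | intros k Hk _; replace k with 0%nat by lia; lra].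
  - destruct (classic (exists k, (k <= N)%nat /\ P k = true)) as [Hex | Hno].
    + destruct (IHN Hex) as [m [Hm [Pm Hmin]]].
      destruct (P (S N)) eqn:PSN; [destruct (Rle_dec (f m) (f (S N))) as [Hle | Hgt] |].
      * exists m. repeat split; [lia | exact Pm |].
        intros k Hk Pk. destruct (Nat.eq_dec k (S N)) as [-> | Hne]; [exact Hle | apply Hmin; [lia | exact Pk]].
      * exists (S N). repeat split; [lia | exact PSN |].
        intros k Hk Pk. destruct (Nat.eq_dec k (S N)) as [-> | Hne]; [lra |].
        apply Rlt_le, Rlt_le_trans with (f m); [lra | apply Hmin; [lia | exact Pk]].
      * exists m. repeat split; [lia | exact Pm |].
        intros k Hk Pk. destruct (Nat.eq_dec k (S N)) as [-> | Hne];
          [congruence | apply Hmin; [lia | exact Pk]].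
    + assert (k0 = S N) as -> by (destruct (Nat.eq_dec k0 (S N)); [assumption|];
                                  exfalso; apply Hno; exists k0; split; [lia | exact Pk0]).
      exists (S N). repeat split; [lia | exact Pk0 |].
      intros k Hk Pk. destruct (Nat.eq_dec k (S N)) as [-> | Hne]; [lra |].
      exfalso; apply Hno; exists k; split; [lia | exact Pk].
Qed.

Lemma in_range_le n k : in_range n k = true -> (1 <= k <= n)%nat.
Proof. unfold in_range; rewrite Bool.andb_true_iff, !Nat.leb_le; tauto. Qed.

Lemma inf_over_argmin n (I : nat -> R) A m :
  in_range n m = true -> A m = true ->
  (forall k, in_range n k = true -> A k = true -> I m <= I k) ->
  inf_over n I A = Finite (I m).
Proof.
  intros Hm HAm Hmin. apply is_glb_Rbar_unique. split.
  - intros v [k [Hk [HAk ->]]]. apply Hmin; assumption.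
  - intros b Hb. apply Hb. exists m. auto.
Qed.

Lemma sum_f_R0_ge_term (f : nat -> R) m N : (forall k, 0 <= f k) -> (m <= N)%nat ->
  f m <= sum_f_R0 f N.
Proof.
  intros Hf. induction N as [|N IHN]; intros Hm; simpl.
  - replace m with 0%nat by lia; lra.
  - destruct (Nat.eq_dec m (S N)) as [-> | Hne].
    + pose proof (cond_pos_sum f N Hf). lra.
    + specialize (IHN ltac:(lia)). specialize (Hf (S N)). lra.
Qed.

(* Every term of [A] has exponent at least [I m]; there are at most [n + 1] terms. *)
Lemma mass_Rpower_bounds n mu (I : nat -> R) A m theta c C :
  1 <= theta -> 0 < c ->
  (forall k, in_range n k = true -> c <= mu k * Rpower theta (I k) <= C) ->
  in_range n m = true -> A m = true ->
  (forall k, in_range n k = true -> A k = true -> I m <= I k) ->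
  c <= mass n mu A * Rpower theta (I m) <= INR (S n) * C.
Proof.
  intros Hth Hc Hmu Hm HAm Hmin.
  assert (Hpow : forall y, 0 < Rpower theta y) by (intros; apply exp_pos).
  assert (Hmu_pos : forall k, in_range n k = true -> 0 < mu k).
  { intros k Hk. destruct (Hmu k Hk) as [Hlo _].
    apply Rmult_lt_reg_r with (Rpower theta (I k)); [apply Hpow | lra]. }
  assert (HC : 0 < C) by (destruct (Hmu m Hm); lra).
  unfold mass. split.
  - apply Rle_trans with (mu m * Rpower theta (I m)); [apply Hmu, Hm |].
    apply Rmult_le_compat_r; [left; apply Hpow |].
    replace (mu m) with (if andb (in_range n m) (A m) then mu m else 0) by (rewrite Hm, HAm; reflexivity).
    apply (sum_f_R0_ge_term (fun k => if andb (in_range n k) (A k) then mu k else 0));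
      [| apply in_range_le in Hm; lia].
    intros k. destruct (in_range n k) eqn:Hk; simpl; [| lra].
    destruct (A k); [left; apply Hmu_pos, Hk | lra].
  - rewrite (Rmult_comm (sum_f_R0 _ n)), scal_sum, (Rmult_comm (INR (S n))), <- sum_cte.
    apply sum_Rle. intros k _.
    destruct (in_range n k) eqn:Hk; simpl; [destruct (A k) eqn:HAk |]; [| lra | lra].
    destruct (Hmu k Hk) as [_ Hup].
    apply Rle_trans with (mu k * Rpower theta (I k)); [| exact Hup].
    apply Rmult_le_compat_l; [left; apply Hmu_pos, Hk |].
    apply Rle_Rpower; [exact Hth | apply Hmin; assumption].
Qed.

Lemma eventually_large_and (P Q : R -> Prop) :
  eventually_large P -> eventually_large Q -> eventually_large (fun theta => P theta /\ Q theta).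
Proof.
  intros [T1 H1] [T2 H2]. exists (Rmax T1 T2). intros theta Hth. split;
    [apply H1 | apply H2]; eapply Rle_lt_trans; [| exact Hth | | exact Hth];
    [apply Rmax_l | apply Rmax_r].
Qed.

Lemma eventually_large_div_ln B eps : 0 < eps ->
  eventually_large (fun theta => 1 < theta /\ Rabs (B / ln theta) < eps).
Proof.
  intros Heps. exists (exp (Rabs B / eps)). intros theta Hth.
  assert (HB : 0 <= Rabs B / eps) by (apply Rdiv_le_0_compat; [apply Rabs_pos | lra]).
  assert (Hth1 : 1 < theta) by (pose proof (exp_ineq1_le (Rabs B / eps)); lra).
  assert (Hln : Rabs B / eps < ln theta)
    by (rewrite <- (ln_exp (Rabs B / eps)); apply ln_increasing; [apply exp_pos | exact Hth]).
  split; [exact Hth1 |].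
  assert (Hln0 : 0 < ln theta) by lra.
  rewrite Rabs_div, (Rabs_right (ln theta)) by lra.
  apply (Rmult_lt_compat_l eps) in Hln; [| exact Heps].
  replace (eps * (Rabs B / eps)) with (Rabs B) in Hln by (field; lra).
  apply Rmult_lt_reg_r with (ln theta); [exact Hln0 |].
  replace (Rabs B / ln theta * ln theta) with (Rabs B) by (field; lra). lra.
Qed.

Lemma ln_div_ln_bounds theta a c C M : 1 < theta -> 0 < c -> c <= M * Rpower theta a <= C ->
  - a + ln c / ln theta <= ln M / ln theta <= - a + ln C / ln theta.
Proof.
  intros Hth Hc [Hlo Hup].
  assert (Hln : 0 < ln theta) by (rewrite <- ln_1; apply ln_increasing; lra).
  assert (Hpow : 0 < Rpower theta a) by apply exp_pos.
  assert (HM : 0 < M) by (apply Rmult_lt_reg_r with (Rpower theta a); lra).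
  assert (Hsplit : ln M / ln theta = - a + ln (M * Rpower theta a) / ln theta)
    by (rewrite ln_mult, ln_Rpower by lra; field; lra).
  rewrite Hsplit. split; apply Rplus_le_compat_l; unfold Rdiv;
    apply Rmult_le_compat_r; try (left; apply Rinv_0_lt_compat, Hln); apply ln_le; lra.
Qed.

Lemma LDP_finite_ln_of_Rpower_bounds n mu (I : nat -> R) c C :
  0 < c -> (forall k, in_range n k = true -> 0 <= I k) ->
  eventually_large (fun theta =>
    forall k, in_range n k = true -> c <= mu theta k * Rpower theta (I k) <= C) ->
  LDP_finite n mu ln I.
Proof.
  intros Hc HI Hev. split; [exact HI |].
  intros A [k0 [Hk0 HAk0]] eps Heps.
  destruct (finite_argmin (fun k => andb (in_range n k) (A k)) I n) as [m [_ [HmA Hmin]]].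
  { exists k0. rewrite Hk0, HAk0. apply in_range_le in Hk0. split; [lia | reflexivity]. }
  apply andb_prop in HmA as [Hm HAm].
  assert (Hmin' : forall k, in_range n k = true -> A k = true -> I m <= I k).
  { intros k Hk HAk. apply Hmin; [apply in_range_le in Hk; lia | rewrite Hk, HAk; reflexivity]. }
  rewrite (inf_over_argmin n I A m Hm HAm Hmin').
  set (C' := INR (S n) * C).
  destruct (eventually_large_and _ _ Hev (eventually_large_and _ _
              (eventually_large_div_ln (ln c) eps Heps) (eventually_large_div_ln (ln C') eps Heps)))
    as [T HT].
  assert (Hbounds : forall theta, T < theta ->
            - I m - eps <= ln (mass n (mu theta) A) / ln theta <= - I m + eps).
  { intros theta Hth. destruct (HT theta Hth) as [Hmu [[Hth1 Hlnc] [_ HlnC]]].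
    apply Rabs_def2 in Hlnc, HlnC.
    destruct (ln_div_ln_bounds theta (I m) c C' (mass n (mu theta) A) Hth1 Hc
                (mass_Rpower_bounds n (mu theta) I A m theta c C ltac:(lra) Hc Hmu Hm HAm Hmin'))
      as [Hlo Hup].
    lra. }
  split; exists T; intros theta Hth; simpl; apply Hbounds in Hth; lra.
Qed.

Theorem theorem4p6 (n : nat) (Hn : (1 <= n)%nat) :
  LDP_finite n (fun theta k => law_X1n n theta k) ln (fun k => INR k - 1).
Proof.
  apply (LDP_finite_ln_of_Rpower_bounds n _ _ (/ (INR n * 2 ^ n)) (INR (fact n))).
  - apply Rinv_0_lt_compat, Rmult_lt_0_compat; [apply lt_0_INR; lia | apply pow_lt; lra].
  - intros k Hk. apply in_range_le in Hk.
    assert (1 <= INR k) by (apply (le_INR 1); lia). lra.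
  - exists (INR n). intros theta Hth k Hk.
    apply law_X1n_Rpower_bounds; [apply in_range_le, Hk | lra].
Qed.
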